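(* Let $p\in\mathbb N$ and let $u_j(t)$, $j\in\mathbb Z$, be a solution (on an interval containing $t=0$) of the lattice $$u'_j=u_j(u_{j+p}+\cdots+u_{j+1}-u_{j-1}-\cdots-u_{j-p})$$ satisfying the boundary conditions $u_j=0$ for $j\le 0$ and such that $u_j\ne 0$ for $j>0$. Then it admits the representation $$u_1=f'_1/f_1,\qquad u_j=f'_j/f_j-f'_{j-1}/f_{j-1},\quad j>1,$$ where the functions $f_j$, $j\ge -p$, satisfy the bilinear lattice equation $$f_{j-1}f'_j-f'_{j-1}f_j=f_{j-p-1}f_{j+p},\qquad j=1,2,\dots,$$ with $f_{-p}=\dots=f_0=1$ and $f_1(0)=\dots=f_p(0)=1$.
   Context: $f'=df/dt$. *)

From Stdlib Require Export Reals ZArith.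
From Coquelicot Require Export Coquelicot.
Open Scope R_scope.

(* Right-hand side of the lattice: sum_{k=1}^{p} (u_{j+k} - u_{j-k}) at time t
   (for p >= 1). *)
Definition lattice_sum (p : nat) (u : Z -> R -> R) (j : Z) (t : R) : R :=
  sum_f_R0 (fun k => u (j + Z.of_nat (S k))%Z t - u (j - Z.of_nat (S k))%Z t)
           (Nat.pred p).

From Stdlib Require Import Reals ZArith Lra Lia.
From Coquelicot Require Import Coquelicot.
Open Scope R_scope.

(* Put S_j = u_1 + ... + u_j, so that S_j = 0 for j <= 0 and u_j = S_j - S_{j-1},
   and E_j(t) = exp (int_0^t S_j).  For any constants C_j, f_j = C_j E_j has
   logarithmic derivative S_j, which gives the representation of the u_j.  The
   lattice telescopes to u_j' = u_j (S_{j+p} - S_j - S_{j-1} + S_{j-p-1}), so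
   u_j E_{j-1} E_j and E_{j-p-1} E_{j+p} have the same logarithmic derivative and
   u_j E_{j-1} E_j = u_j(0) E_{j-p-1} E_{j+p}.  The bilinear equation thus reduces
   to C_{j-1} C_j u_j(0) = C_{j-p-1} C_{j+p}, which defines C_{j+p} recursively
   from C_{-p} = ... = C_p = 1; the C_j are nonzero because the u_j(0) are. *)

Section CourseOfValues.

Variables (A : Type) (F : (nat -> A) -> nat -> A) (x0 : A).

Hypothesis F_causal :
  forall g h n, (forall m, (m < n)%nat -> g m = h m) -> F g n = F h n.

(* Course-of-values recursion: the (n+1)-th iterate of a causal [F] is already
   correct at every index up to n, whatever the seed. *)
Definition cov_fix (n : nat) : A := Nat.iter (S n) F (fun _ => x0) n.

Lemma iter_causal_stable k n :
  (n < k)%nat -> Nat.iter k F (fun _ => x0) n = Nat.iter (S k) F (fun _ => x0) n.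
Proof.
  revert n; induction k as [|k IH]; intros n Hn; [lia|].
  simpl. apply F_causal. intros m Hm. apply IH. lia.
Qed.

Lemma iter_causal_cov_fix k n : (n < k)%nat -> Nat.iter k F (fun _ => x0) n = cov_fix n.
Proof.
  intros Hn. replace k with (S n + (k - S n))%nat by lia.
  induction (k - S n)%nat as [|d IH]; [now rewrite Nat.add_0_r|].
  rewrite <- IH, Nat.add_succ_r. symmetry. apply iter_causal_stable. lia.
Qed.

Lemma cov_fix_eq n : cov_fix n = F cov_fix n.
Proof.
  unfold cov_fix at 1. simpl. apply F_causal. intros m Hm. now apply iter_causal_cov_fix.
Qed.

End CourseOfValues.

Section BilinearConstants.

Variables (p : nat) (w : Z -> R).
Hypothesis p_pos : (1 <= p)%nat.
Hypothesis w_neq0 : forall j, (1 <= j)%Z -> w j <> 0.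

(* [c n] stands for [C (n - p)]: the shift makes the recursion start at index 0. *)
Definition bilinear_step (c : nat -> R) (n : nat) : R :=
  if (n <=? 2 * p)%nat then 1
  else c (n - p - 1)%nat * c (n - p)%nat * w (Z.of_nat (n - 2 * p)) / c (n - 2 * p - 1)%nat.

Definition bilinear_seq : nat -> R := cov_fix _ bilinear_step 1.

Lemma bilinear_seq_eq n : bilinear_seq n = bilinear_step bilinear_seq n.
Proof.
  apply cov_fix_eq. intros g h m Hgh. unfold bilinear_step.
  destruct (m <=? 2 * p)%nat eqn:E; [reflexivity|].
  apply Nat.leb_gt in E. rewrite !Hgh by lia. reflexivity.
Qed.

Lemma bilinear_seq_small n : (n <= 2 * p)%nat -> bilinear_seq n = 1.
Proof.
  intros Hn. rewrite bilinear_seq_eq. unfold bilinear_step.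
  now rewrite (proj2 (Nat.leb_le _ _) Hn).
Qed.

Lemma bilinear_seq_neq0 n : bilinear_seq n <> 0.
Proof.
  induction n as [n IH] using (well_founded_induction lt_wf).
  rewrite bilinear_seq_eq. unfold bilinear_step.
  destruct (n <=? 2 * p)%nat eqn:E; [lra|].
  apply Nat.leb_gt in E.
  assert (w (Z.of_nat (n - 2 * p)) <> 0) by (apply w_neq0; lia).
  assert (bilinear_seq (n - 2 * p - 1) <> 0) by (apply IH; lia).
  apply Rmult_integral_contrapositive_currified; [|now apply Rinv_neq_0_compat].
  repeat apply Rmult_integral_contrapositive_currified; auto; apply IH; lia.
Qed.

Lemma bilinear_seq_rec n : (2 * p < n)%nat ->
  bilinear_seq (n - p - 1) * bilinear_seq (n - p) * w (Z.of_nat (n - 2 * p))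
  = bilinear_seq (n - 2 * p - 1) * bilinear_seq n.
Proof.
  intros Hn. rewrite (bilinear_seq_eq n). unfold bilinear_step.
  rewrite (proj2 (Nat.leb_gt _ _) Hn). field. apply bilinear_seq_neq0.
Qed.

Lemma bilinear_constants_exist :
  exists C : Z -> R,
    (forall j, C j <> 0) /\
    (forall j, (- Z.of_nat p <= j <= Z.of_nat p)%Z -> C j = 1) /\
    (forall j, (1 <= j)%Z ->
       C (j - 1)%Z * C j * w j = C (j - Z.of_nat p - 1)%Z * C (j + Z.of_nat p)%Z).
Proof.
  exists (fun j => bilinear_seq (Z.to_nat (j + Z.of_nat p))).
  split; [|split].
  - intros j. apply bilinear_seq_neq0.
  - intros j Hj. apply bilinear_seq_small. lia.
  - intros j Hj. set (n := Z.to_nat (j + 2 * Z.of_nat p)).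
    replace (Z.to_nat (j - 1 + Z.of_nat p)) with (n - p - 1)%nat by lia.
    replace (Z.to_nat (j + Z.of_nat p)) with (n - p)%nat by lia.
    replace (Z.to_nat (j - Z.of_nat p - 1 + Z.of_nat p)) with (n - 2 * p - 1)%nat by lia.
    replace (Z.to_nat (j + Z.of_nat p + Z.of_nat p)) with n by lia.
    pose proof (bilinear_seq_rec n ltac:(lia)) as Hrec.
    replace (Z.of_nat (n - 2 * p)) with j in Hrec by lia.
    exact Hrec.
Qed.

End BilinearConstants.

Fixpoint partial_sum (v : Z -> R) (n : nat) : R :=
  match n with
  | O => 0
  | S n => partial_sum v n + v (Z.of_nat (S n))
  end.

Definition partial_sumZ (v : Z -> R) (j : Z) : R := partial_sum v (Z.to_nat j).

Lemma partial_sumZ_nonpos v j : (j <= 0)%Z -> partial_sumZ v j = 0.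
Proof. intros Hj. unfold partial_sumZ. now replace (Z.to_nat j) with O by lia. Qed.

Lemma partial_sumZ_diff v :
  (forall j, (j <= 0)%Z -> v j = 0) ->
  forall j, v j = partial_sumZ v j - partial_sumZ v (j - 1).
Proof.
  intros Hv j. destruct (Z_le_gt_dec j 0) as [Hj|Hj].
  - rewrite Hv, !partial_sumZ_nonpos by lia. lra.
  - unfold partial_sumZ. replace (Z.to_nat j) with (S (Z.to_nat (j - 1))) by lia.
    cbn [partial_sum]. replace (Z.of_nat (S (Z.to_nat (j - 1)))) with j by lia. lra.
Qed.

Lemma lattice_sum_telescope p u t :
  (1 <= p)%nat -> (forall j, (j <= 0)%Z -> u j t = 0) ->
  forall j,
    let P k := partial_sumZ (fun i => u i t) k in
    lattice_sum p u j t
    = P (j + Z.of_nat p)%Z - P j - P (j - 1)%Z + P (j - Z.of_nat p - 1)%Z.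
Proof.
  intros Hp Hu j P. pose proof (partial_sumZ_diff (fun i => u i t) Hu) as Hdiff.
  destruct p as [|q]; [lia|]. unfold lattice_sum; simpl Nat.pred.
  induction q as [|q IH].
  - simpl sum_f_R0. rewrite (Hdiff (j + 1)%Z), (Hdiff (j - 1)%Z).
    replace (j + 1 - 1)%Z with j by lia.
    replace (j + Z.of_nat 1)%Z with (j + 1)%Z by lia.
    replace (j - Z.of_nat 1 - 1)%Z with (j - 1 - 1)%Z by lia. unfold P. lra.
  - rewrite tech5, IH by lia. cbv beta.
    rewrite (Hdiff (j + Z.of_nat (S (S q)))%Z), (Hdiff (j - Z.of_nat (S (S q)))%Z).
    replace (j + Z.of_nat (S (S q)) - 1)%Z with (j + Z.of_nat (S q))%Z by lia.
    replace (j - Z.of_nat (S q) - 1)%Z with (j - Z.of_nat (S (S q)))%Z by lia.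
    unfold P. lra.
Qed.

Lemma continuous_partial_sum (u : Z -> R -> R) n t :
  (forall j, continuous (u j) t) -> continuous (fun s => partial_sum (fun i => u i s) n) t.
Proof.
  intros Hu. induction n as [|n IH]; simpl.
  - apply continuous_const.
  - exact (continuous_plus _ _ t IH (Hu _)).
Qed.

Lemma is_derive_exp_RInt (g : R -> R) (a b c t : R) :
  a < c < b -> a < t < b -> (forall s, a < s < b -> continuous g s) ->
  is_derive (fun s => exp (RInt g c s)) t (g t * exp (RInt g c t)).
Proof.
  intros Hc Ht Hg.
  apply (is_derive_comp exp (fun s => RInt g c s)); [apply is_derive_exp|].
  apply (is_derive_RInt g _ c); [|now apply Hg].
  apply (locally_interval _ t a b); simpl; try lra.
  intros s Has Hsb. apply (@RInt_correct R_CompleteNormedModule).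
  apply (@ex_RInt_continuous R_CompleteNormedModule).
  intros x Hx. apply Hg. unfold Rmin, Rmax in Hx; destruct (Rle_dec c s); lra.
Qed.

Lemma same_growth_proportional (y z k : R -> R) (a b c t : R) :
  a < c < b -> a < t < b ->
  (forall s, a < s < b -> is_derive y s (k s * y s)) ->
  (forall s, a < s < b -> is_derive z s (k s * z s)) ->
  (forall s, a < s < b -> z s <> 0) ->
  y t * z c = y c * z t.
Proof.
  intros Hc Ht Dy Dz Hz.
  assert (Dq : forall s, a < s < b -> is_derive (fun s => y s / z s) s 0).
  { intros s Hs. pose proof (is_derive_div _ _ _ _ _ (Dy s Hs) (Dz s Hs) (Hz s Hs)) as D.
    replace 0 with ((k s * y s * z s - y s * (k s * z s)) / z s ^ 2) by (field; auto).
    exact D. }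
  destruct (MVT_gen (fun s => y s / z s) c t (fun _ => 0)) as [d [_ Hd]].
  - intros s Hs. apply Dq. unfold Rmin, Rmax in Hs; destruct (Rle_dec c t); lra.
  - intros s Hs. apply continuity_pt_filterlim.
    apply (@ex_derive_continuous R_AbsRing R_NormedModule (fun s => y s / z s)).
    exists 0. apply Dq. unfold Rmin, Rmax in Hs; destruct (Rle_dec c t); lra.
  - assert (z t <> 0) by (apply Hz; lra). assert (z c <> 0) by (apply Hz; lra).
    apply (Rmult_eq_reg_r (/ (z t * z c)));
      [|now apply Rinv_neq_0_compat, Rmult_integral_contrapositive_currified].
    field_simplify; auto. lra.
Qed.

Definition potential (u : Z -> R -> R) (j : Z) (t : R) : R :=
  exp (RInt (fun s => partial_sumZ (fun i => u i s) j) 0 t).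

Lemma potential_at_0 u j : potential u j 0 = 1.
Proof. unfold potential. rewrite RInt_point. apply exp_0. Qed.

Lemma potential_neq0 u j t : potential u j t <> 0.
Proof. apply Rgt_not_eq, exp_pos. Qed.

Lemma potential_nonpos u j t : (j <= 0)%Z -> potential u j t = 1.
Proof.
  intros Hj. unfold potential.
  rewrite (RInt_ext _ (fun _ => 0)) by (intros; now apply partial_sumZ_nonpos).
  rewrite RInt_const. unfold scal; simpl; unfold mult; simpl.
  rewrite Rmult_0_r. apply exp_0.
Qed.

Lemma is_derive_potential (u : Z -> R -> R) (a b : R) :
  a < 0 < b -> (forall j t, a < t < b -> ex_derive (u j) t) ->
  forall j t, a < t < b ->
  is_derive (potential u j) t (partial_sumZ (fun i => u i t) j * potential u j t).
Proof.
  intros Hab Hu j t Ht.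
  apply (is_derive_exp_RInt (fun s => partial_sumZ (fun i => u i s) j) a b); auto.
  intros s Hs. apply continuous_partial_sum. intros i.
  apply (@ex_derive_continuous R_AbsRing R_NormedModule (u i)). now apply Hu.
Qed.

Lemma Derive_scal_potential (u : Z -> R -> R) (a b : R) :
  a < 0 < b -> (forall j t, a < t < b -> ex_derive (u j) t) ->
  forall c j t, a < t < b ->
  Derive (fun s => c * potential u j s) t
  = partial_sumZ (fun i => u i t) j * (c * potential u j t).
Proof.
  intros Hab Hu c j t Ht. apply is_derive_unique.
  replace (partial_sumZ (fun i => u i t) j * (c * potential u j t))
    with (c * (partial_sumZ (fun i => u i t) j * potential u j t)) by ring.
  now apply is_derive_scal, (is_derive_potential u a b).
Qed.

Lemma lattice_first_integral (p : nat) (a b : R) (u : Z -> R -> R) :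
  (1 <= p)%nat -> a < 0 < b ->
  (forall j t, a < t < b -> ex_derive (u j) t) ->
  (forall j t, a < t < b -> Derive (u j) t = u j t * lattice_sum p u j t) ->
  (forall j t, (j <= 0)%Z -> a < t < b -> u j t = 0) ->
  forall j t, a < t < b ->
  u j t * potential u (j - 1) t * potential u j t
  = u j 0 * (potential u (j - Z.of_nat p - 1) t * potential u (j + Z.of_nat p) t).
Proof.
  intros Hp Hab Hdiff Hode Hbd j t Ht.
  pose proof (is_derive_potential u a b Hab Hdiff) as DE.
  assert (Derive_potential : forall k s, a < s < b ->
    Derive (fun x => potential u k x) s = partial_sumZ (fun i => u i s) k * potential u k s).
  { intros k s Hs. now apply is_derive_unique, DE. }
  pose proof (same_growth_proportional
    (fun s => u j s * potential u (j - 1) s * potential u j s)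
    (fun s => potential u (j - Z.of_nat p - 1) s * potential u (j + Z.of_nat p) s)
    (fun s => partial_sumZ (fun i => u i s) (j + Z.of_nat p)
              + partial_sumZ (fun i => u i s) (j - Z.of_nat p - 1))
    a b 0 t ltac:(lra) Ht) as H.
  cbv beta in H. rewrite !potential_at_0, !Rmult_1_r in H.
  apply H; clear H.
  - intros s Hs. auto_derive.
    + repeat split; auto; eexists; apply DE; auto.
    + rewrite Hode, !Derive_potential by auto.
      rewrite (lattice_sum_telescope p u s Hp) by (intros; now apply Hbd). ring.
  - intros s Hs. auto_derive.
    + repeat split; eexists; apply DE; auto.
    + rewrite !Derive_potential by auto. ring.
  - intros s _. apply Rmult_integral_contrapositive_currified; apply potential_neq0.
Qed.

Theorem proposition2 (p : nat) (a b : R) (u : Z -> R -> R)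
  (Hp : (1 <= p)%nat)
  (Hab : a < 0 < b)
  (Hdiff : forall (j : Z) (t : R), a < t < b -> ex_derive (u j) t)
  (Hode : forall (j : Z) (t : R), a < t < b ->
     Derive (u j) t = u j t * lattice_sum p u j t)
  (Hbd : forall (j : Z) (t : R), (j <= 0)%Z -> a < t < b -> u j t = 0)
  (Hnz : forall (j : Z) (t : R), (0 < j)%Z -> a < t < b -> u j t <> 0) :
  exists f : Z -> R -> R,
    (forall (j : Z) (t : R), (- Z.of_nat p <= j)%Z -> a < t < b ->
        ex_derive (f j) t /\ f j t <> 0) /\
    (forall t : R, a < t < b -> u 1%Z t = Derive (f 1%Z) t / f 1%Z t) /\
    (forall (j : Z) (t : R), (1 < j)%Z -> a < t < b ->
        u j t = Derive (f j) t / f j t - Derive (f (j - 1)%Z) t / f (j - 1)%Z t) /\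
    (forall (j : Z) (t : R), (1 <= j)%Z -> a < t < b ->
        f (j - 1)%Z t * Derive (f j) t - Derive (f (j - 1)%Z) t * f j t
        = f (j - Z.of_nat p - 1)%Z t * f (j + Z.of_nat p)%Z t) /\
    (forall (j : Z) (t : R), (- Z.of_nat p <= j <= 0)%Z -> a < t < b -> f j t = 1) /\
    (forall j : Z, (1 <= j <= Z.of_nat p)%Z -> f j 0 = 1).
Proof.
  destruct (bilinear_constants_exist p (fun j => u j 0) Hp)
    as (C & C_neq0 & C_one & C_rec).
  { intros j Hj. apply Hnz; lia || lra. }
  set (S j t := partial_sumZ (fun i => u i t) j).
  set (f j t := C j * potential u j t).
  assert (f_neq0 : forall j t, f j t <> 0).
  { intros j t. apply Rmult_integral_contrapositive_currified; auto using potential_neq0. }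
  assert (Df : forall j t, a < t < b -> Derive (f j) t = S j t * f j t).
  { intros j t Ht. now apply (Derive_scal_potential u a b). }
  assert (log_derivative : forall j t, a < t < b -> Derive (f j) t / f j t = S j t).
  { intros j t Ht. rewrite Df by auto. field. apply f_neq0. }
  assert (u_S : forall j t, a < t < b -> u j t = S j t - S (j - 1)%Z t).
  { intros j t Ht. apply (partial_sumZ_diff (fun i => u i t)). intros; now apply Hbd. }
  exists f; split; [|split; [|split; [|split; [|split]]]].
  - intros j t _ Ht. split; [|apply f_neq0].
    apply ex_derive_scal, (ex_intro _ _ (is_derive_potential u a b Hab Hdiff j t Ht)).
  - intros t Ht. rewrite log_derivative, u_S by auto.
    unfold S. rewrite (partial_sumZ_nonpos _ (1 - 1)) by lia. lra.
  - intros j t _ Ht. rewrite !log_derivative; auto.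
  - intros j t Hj Ht. rewrite !Df by auto. unfold f.
    transitivity (C (j - 1)%Z * C j * (u j t * potential u (j - 1) t * potential u j t)).
    + rewrite (u_S j t Ht). ring.
    + rewrite (lattice_first_integral p a b u Hp Hab Hdiff Hode Hbd j t Ht).
      transitivity (C (j - 1)%Z * C j * u j 0
        * (potential u (j - Z.of_nat p - 1) t * potential u (j + Z.of_nat p) t)); [ring|].
      rewrite C_rec by lia. ring.
  - intros j t Hj _. unfold f. rewrite C_one, potential_nonpos by lia. ring.
  - intros j Hj. unfold f. rewrite C_one, potential_at_0 by lia. ring.
Qed.
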